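(* Let $k$ be a difference field of characteristic $0$, $R=k\{y_1,\ldots,y_n\}$, and $I$ a radical well-mixed $\sigma$-ideal of $R$. Suppose $\mathbf{u}_1,\mathbf{u}_2\in\mathbb{N}[x]^n$ satisfy $\mathbf{y}^{\mathbf{u}_1+\mathbf{u}_2}\in I$. Then $I=\langle I,\mathbf{y}^{\mathbf{u}_1}\rangle_r\cap\langle I,\mathbf{y}^{\mathbf{u}_2}\rangle_r$.
   Context: A difference field is a field $k$ with a ring endomorphism $\sigma$; $R=k\{y_1,\ldots,y_n\}$ is the polynomial ring over $k$ in the variables $\sigma^j(y_i)$, with $\sigma$ extended naturally. For $p=\sum_ic_ix^i\in\mathbb{N}[x]$ and $a\in R$, $a^p=\prod_i(\sigma^i(a))^{c_i}$; $\mathbf{y}^{\mathbf{u}}=y_1^{u_1}\cdots y_n^{u_n}$. A $\sigma$-ideal is an ideal stable under $\sigma$; well-mixed if $ab\in I\Rightarrow a\sigma(b)\in I$. $\langle F\rangle_r$ is the smallest radical well-mixed $\sigma$-ideal containing $F$; $\langle I,f\rangle_r$ means $\langle I\cup\{f\}\rangle_r$. *)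

From HB Require Import structures.
From mathcomp Require Import all_boot all_algebra.
From mathcomp Require Import finmap.
From mathcomp.multinomials Require Import monalg.

Set Implicit Arguments.
Unset Strict Implicit.
Unset Printing Implicit Defensive.

Import GRing.Theory.
Local Open Scope ring_scope.

(* The difference polynomial ring k{y_1,...,y_n}: the commutative polynomial
   ring over k in the (infinitely many) variables y_(i,j) = sigma^j (y_i),
   i < n, j in nat. *)
Definition dpoly (k : fieldType) (n : nat) :=
  {malg k[cmonom ('I_n * nat)%type]}.

Definition dvar (k : fieldType) (n : nat) (i : 'I_n) (j : nat) : dpoly k n :=
  mkmalgU (ucm (i, j)) 1.

Definition dshift_mon (k : fieldType) (n : nat)
    (m : cmonom ('I_n * nat)%type) : dpoly k n :=
  \prod_(p <- finsupp m) dvar k p.1 p.2.+1 ^+ m p.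

Definition dsigma (k : fieldType) (sk : {rmorphism k -> k}) (n : nat)
    (a : dpoly k n) : dpoly k n :=
  mmap (fun c : k => malgC (sk c) : dpoly k n) (@dshift_mon k n) a.

(* a^p for p = sum_i c_i x^i in N[x]:  prod_i (sigma^i a)^(c_i) *)
Definition dpow (k : fieldType) (sk : {rmorphism k -> k}) (n : nat)
    (a : dpoly k n) (p : {poly nat}) : dpoly k n :=
  \prod_(i < size p) (iter i (@dsigma k sk n) a) ^+ (nth 0%N (polyseq p) i).

Definition ymon (k : fieldType) (sk : {rmorphism k -> k}) (n : nat)
    (u : 'I_n -> {poly nat}) : dpoly k n :=
  \prod_(i < n) dpow sk (dvar k i 0) (u i).

Definition is_ideal (R : comRingType) (I : R -> Prop) : Prop :=
  [/\ I 0, (forall a b, I a -> I b -> I (a + b)) &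
      (forall r a, I a -> I (r * a))].

Definition is_sigma_ideal (k : fieldType) (sk : {rmorphism k -> k}) (n : nat)
    (I : dpoly k n -> Prop) : Prop :=
  is_ideal I /\ (forall a, I a -> I (dsigma sk a)).

Definition is_well_mixed (k : fieldType) (sk : {rmorphism k -> k}) (n : nat)
    (I : dpoly k n -> Prop) : Prop :=
  forall a b, I (a * b) -> I (a * dsigma sk b).

Definition is_radical (R : comRingType) (I : R -> Prop) : Prop :=
  forall (a : R) (m : nat), I (a ^+ m.+1) -> I a.

Definition is_rwm_sigma_ideal (k : fieldType) (sk : {rmorphism k -> k})
    (n : nat) (I : dpoly k n -> Prop) : Prop :=
  [/\ is_sigma_ideal sk I, is_well_mixed sk I & is_radical I].

(* <F>_r : the smallest radical well-mixed sigma-ideal containing F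
   (intersection of all such ideals) *)
Definition rwm_closure (k : fieldType) (sk : {rmorphism k -> k}) (n : nat)
    (F : dpoly k n -> Prop) : dpoly k n -> Prop :=
  fun a => forall J : dpoly k n -> Prop,
    is_rwm_sigma_ideal sk J -> (forall b, F b -> J b) -> J a.

Definition rwm_closure_add (k : fieldType) (sk : {rmorphism k -> k})
    (n : nat) (I : dpoly k n -> Prop) (f : dpoly k n) : dpoly k n -> Prop :=
  rwm_closure sk (fun b => I b \/ b = f).

From HB Require Import structures.
From mathcomp Require Import all_boot all_algebra.
From mathcomp Require Import finmap.
From mathcomp.multinomials Require Import monalg.
Import GRing.Theory.
Local Open Scope ring_scope.

(* Since y^(u1+u2) = y^u1 * y^u2, it suffices to show that I(fg) forces
   <I,f>_r ∩ <I,g>_r ⊆ I.  Colon ideals (I : b) of a radical well-mixed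
   σ-ideal are again radical well-mixed σ-ideals.  Hence <I,g>_r ⊆ (I : f),
   so f lies in the intersection K of the (I : c) over c ∈ <I,g>_r; thus
   <I,f>_r ⊆ K.  An element a of both closures then has a * a ∈ I, and
   a ∈ I because I is radical. *)

Section DifferenceMonomials.
Variables (k : fieldType) (sk : {rmorphism k -> k}) (n : nat).
Notation R := (dpoly k n).

Lemma dpow_widen (a : R) (p : {poly nat}) (N : nat) :
  (size p <= N)%N ->
  dpow sk a p = \prod_(i < N) iter i (@dsigma k sk n) a ^+ nth 0%N (polyseq p) i.
Proof.
move=> leN; rewrite /dpow.
rewrite (big_ord_widen N (fun i => iter i (@dsigma k sk n) a ^+ nth 0%N (polyseq p) i) leN).
rewrite big_mkcond /=; apply: eq_bigr => i _.
by case: ltnP => // le_p_i; rewrite nth_default // expr0.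
Qed.

Lemma dpowD (a : R) (p q : {poly nat}) :
  dpow sk a (p + q) = dpow sk a p * dpow sk a q.
Proof.
set N := maxn (size p) (size q).
have le_pN : (size p <= N)%N by rewrite leq_maxl.
have le_qN : (size q <= N)%N by rewrite leq_maxr.
have le_pqN : (size (p + q)%R <= N)%N by exact: size_polyD.
rewrite (dpow_widen a _ _ le_pN) (dpow_widen a _ _ le_qN) (dpow_widen a _ _ le_pqN).
by rewrite -big_split; apply: eq_bigr => i _; rewrite coefD exprD.
Qed.

Lemma ymonD (u1 u2 : 'I_n -> {poly nat}) :
  ymon sk (fun i => u1 i + u2 i) = ymon sk u1 * ymon sk u2.
Proof. by rewrite /ymon -big_split; apply: eq_bigr => i _; rewrite dpowD. Qed.

End DifferenceMonomials.

Section RadicalWellMixed.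
Variables (k : fieldType) (sk : {rmorphism k -> k}) (n : nat).
Notation R := (dpoly k n).

Definition colon_ideal (I : R -> Prop) (b : R) : R -> Prop :=
  fun c => I (b * c).

Lemma colon_rwm_sigma_ideal (I : R -> Prop) (b : R) :
  is_rwm_sigma_ideal sk I -> is_rwm_sigma_ideal sk (colon_ideal I b).
Proof.
case=> [[[I0 ID IM] _] Iwm Irad]; rewrite /colon_ideal.
split; [split; [split|] | |].
- by rewrite mulr0.
- by move=> x y Ix Iy; rewrite mulrDr; apply: ID.
- by move=> r x Ix; rewrite mulrCA; apply: IM.
- (* well-mixedness of I is exactly σ-stability of (I : b) *)
  by move=> x; apply: Iwm.
- by move=> x y Ixy; rewrite mulrA; apply: Iwm; rewrite -mulrA.
- (* (b x)^(m+1) = b^m * (b x^(m+1)) *)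
  move=> x m Ixm; apply: (Irad _ m).
  by rewrite exprMn exprS -mulrA mulrCA; apply: IM.
Qed.

Lemma bigcap_rwm_sigma_ideal (T : R -> Prop) (F : R -> R -> Prop) :
  (forall c, T c -> is_rwm_sigma_ideal sk (F c)) ->
  is_rwm_sigma_ideal sk (fun b => forall c, T c -> F c b).
Proof.
move=> HF; split; [split; [split|] | |].
- by move=> c Tc; case: (HF c Tc) => [[[]]].
- by move=> x y Fx Fy c Tc; case: (HF c Tc) => [[[_ D _] _] _ _]; apply: D; auto.
- by move=> r x Fx c Tc; case: (HF c Tc) => [[[_ _ M] _] _ _]; apply: M; auto.
- by move=> x Fx c Tc; case: (HF c Tc) => [[_ S] _ _]; apply: S; auto.
- by move=> x y Fxy c Tc; case: (HF c Tc) => [_ W _]; apply: W; auto.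
- by move=> x m Fx c Tc; case: (HF c Tc) => [_ _ Rad]; apply: (Rad x m); auto.
Qed.

Lemma rwm_closure_add_sub_colon (I : R -> Prop) (f g : R) :
  is_rwm_sigma_ideal sk I -> I (f * g) ->
  forall c, rwm_closure_add sk I g c -> I (f * c).
Proof.
move=> HI Ifg c Ig_c; apply: (Ig_c (colon_ideal I f)).
  exact: colon_rwm_sigma_ideal.
case: HI => [[[_ _ IM] _] _ _].
by move=> b [Ib | ->]; [apply: IM | exact: Ifg].
Qed.

Lemma rwm_closure_add_cap_sub (I : R -> Prop) (f g : R) :
  is_rwm_sigma_ideal sk I -> I (f * g) ->
  forall a, rwm_closure_add sk I f a -> rwm_closure_add sk I g a -> I a.
Proof.
move=> HI Ifg a If_a Ig_a.
pose K b := forall c, rwm_closure_add sk I g c -> colon_ideal I c b.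
have HK : is_rwm_sigma_ideal sk K.
  by apply: bigcap_rwm_sigma_ideal => c _; apply: colon_rwm_sigma_ideal.
have Ka : K a.
  apply: If_a => // b [Ib | ->] c Ig_c; rewrite /colon_ideal.
    by case: HI => [[[_ _ IM] _] _ _]; apply: IM.
  by rewrite mulrC; apply: rwm_closure_add_sub_colon Ifg c Ig_c.
case: HI => _ _ Irad; apply: (Irad a 1).
by rewrite expr2; apply: Ka.
Qed.

Lemma sub_rwm_closure_add (I : R -> Prop) (f a : R) :
  I a -> rwm_closure_add sk I f a.
Proof. by move=> Ia J _ IJ; apply: IJ; left. Qed.

End RadicalWellMixed.

Theorem lemma5p3 (k : fieldType) (sk : {rmorphism k -> k}) (n : nat)
    (char0 : [pchar k] =i pred0)
    (I : dpoly k n -> Prop) (HI : is_rwm_sigma_ideal sk I)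
    (u1 u2 : 'I_n -> {poly nat})
    (Hu : I (ymon sk (fun i => u1 i + u2 i))) :
  forall a : dpoly k n,
    I a <-> (rwm_closure_add sk I (ymon sk u1) a /\
             rwm_closure_add sk I (ymon sk u2) a).
Proof.
rewrite ymonD in Hu; move=> a; split.
- by move=> Ia; split; apply: sub_rwm_closure_add.
- by case; apply: rwm_closure_add_cap_sub HI Hu a.
Qed.
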